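(* Let $0<\beta<1$, $h\in\mathbb{R}$, and let $\sigma\in\{-1,1\}^n$ have law $\mathbb{P}(\sigma)=Z^{-1}\exp\{\frac{\beta}{n}\sum_{i<j}\sigma_i\sigma_j+h\sum_i\sigma_i\}$. Let $\sigma'$ be obtained from $\sigma$ by choosing a site $i\in\{1,\dots,n\}$ uniformly at random and resampling $\sigma_i$ from its conditional law under this Gibbs measure given $(\sigma_j)_{j\neq i}$, and let $\sigma''$ be obtained from $\sigma'$ in the same way. Let $W,W',W''$ be $\sum_i\sigma_i,\sum_i\sigma_i',\sum_i\sigma_i''$, let $Q_k=\mathbb{P}[W'=W+k\mid\sigma]$, $q_k=\mathbb{E}Q_k$, $Q_{k,k}=\mathbb{P}[W'=W+k,W''=W'+k\mid\sigma]$, let $m=\frac1n\sum_{i=1}^n\sigma_i$, and let $m_0$ be the unique solution of $m=\tanh(\beta m+h)$. Then there is a constant $C$ depending only on $\beta,h$ such that for $k=\pm2$, \[ \Bigl|Q_k-\frac{1-m_0^2}{4}\Bigr|\le C\Bigl(|m-m_0|+\frac1n\Bigr),\qquad |Q_{k,k}-Q_k^2|=O(n^{-1}), \] and \[ \Bigl|q_k-\frac{1-m_0^2}{4}\Bigr|=O(n^{-1/2}),\qquad \mathrm{Var}(Q_k)=O(n^{-1}), \] as $n\to\infty$.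
   Context: $Z$ is the normalizing constant of the Gibbs measure (Curie–Weiss model). *)

From HB Require Import structures.
From mathcomp Require Import all_boot all_order all_algebra.
From mathcomp Require Import reals.
From mathcomp Require Import sequences exp.
Set Implicit Arguments. Unset Strict Implicit. Unset Printing Implicit Defensive.
Import Order.TTheory GRing.Theory Num.Theory.
Local Open Scope ring_scope.

Section CW.
Variable R : realType.

Definition tanhR (x : R) : R := (expR x - expR (- x)) / (expR x + expR (- x)).

(* configurations sigma in {-1,1}^n, encoded by booleans (true = +1) *)
Definition config (n : nat) := {ffun 'I_n -> bool}.
Definition spin (b : bool) : R := if b then 1 else -1.

Definition magsum n (s : config n) : R := \sum_(i < n) spin (s i).
Definition mag n (s : config n) : R := magsum s / n%:R.

Definition cw_energy (beta h : R) n (s : config n) : R :=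
  beta / n%:R * (\sum_(i < n) \sum_(j < n | (i < j)%N) spin (s i) * spin (s j))
  + h * magsum s.
Definition cw_weight beta h n (s : config n) : R := expR (cw_energy beta h s).
Definition cw_Z beta h n : R := \sum_(s : config n) cw_weight beta h s.
Definition cw_P beta h n (s : config n) : R := cw_weight beta h s / cw_Z beta h n.

Definition setsite n (s : config n) (i : 'I_n) (b : bool) : config n :=
  [ffun j => if j == i then b else s j].

Definition cond_prob beta h n (s : config n) (i : 'I_n) (b : bool) : R :=
  cw_weight beta h (setsite s i b) /
  (cw_weight beta h (setsite s i true) + cw_weight beta h (setsite s i false)).

(* Glauber transition kernel: choose i uniformly, resample sigma_i from its
   conditional law. K s t = P[sigma' = t | sigma = s]. *)
Definition glauber beta h n (s t : config n) : R :=
  \sum_(i < n) (n%:R)^-1 *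
     ((\big[andb/true]_(j < n | j != i) (t j == s j))%:R * cond_prob beta h s i (t i)).

Definition Qk beta h n (k : R) (s : config n) : R :=
  \sum_(t : config n) glauber beta h s t * (magsum t == magsum s + k)%:R.

Definition Qkk beta h n (k : R) (s : config n) : R :=
  \sum_(t : config n) \sum_(u : config n)
     glauber beta h s t * glauber beta h t u *
     ((magsum t == magsum s + k) && (magsum u == magsum t + k))%:R.

Definition qk beta h n (k : R) : R :=
  \sum_(s : config n) cw_P beta h s * Qk beta h k s.

Definition varQk beta h n (k : R) : R :=
  \sum_(s : config n) cw_P beta h s * (Qk beta h k s - qk beta h n k) ^+ 2.

End CW.

From HB Require Import structures.
From mathcomp Require Import all_boot all_order all_algebra.
From mathcomp Require Import reals ring lra.
From mathcomp Require Import topology normedtype sequences derive realfun exp.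
Set Implicit Arguments. Unset Strict Implicit. Unset Printing Implicit Defensive.
Import Order.TTheory GRing.Theory Num.Theory.
Import numFieldNormedType.Exports.
Local Open Scope ring_scope.

(* One heat-bath step raises W by 2e (e = +-1) exactly when the chosen site
   carries spin -e, with probability (1 - e m)/2, and is resampled to e, with
   probability (1 + e tanh(beta (m + e/n) + h))/2.  So Q_{2e} is an explicit
   function of m, Lipschitz up to O(1/n), Q_{2e,2e} is the product of its
   values at m and m + 2e/n, and the fixed-point equation makes its value at
   m0 equal to (1 - m0^2)/4.  Both averaged bounds then follow from
   E (Q_{2e} - (1 - m0^2)/4)^2 <= 2 E (m - m0)^2 + 2/n and the concentration
   estimate E (m - m0)^2 <= 5 / ((1 - beta) n).  For the latter, flipping
   sigma_i shows E[f(W - sigma_i) (sigma_i - tanh(beta (W - sigma_i)/n + h))] = 0;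
   summed over i with f(A) = A/n - m0 this is n E[(m - m0)(m - tanh(beta m + h))]
   up to O(1), which dominates (1 - beta) n E (m - m0)^2 since tanh is
   1-Lipschitz. *)

Lemma normr_mulB_le (R : numDomainType) (u v u' v' : R) :
  `|u| <= 1 -> `|v'| <= 1 -> `|u * v - u' * v'| <= `|v - v'| + `|u - u'|.
Proof.
move=> u1 v1; rewrite (_ : _ - _ = u * (v - v') + (u - u') * v'); last by ring.
apply: (le_trans (ler_normD _ _)); rewrite !normrM lerD //.
  by rewrite ler_piMl.
by rewrite ler_piMr.
Qed.

Lemma normr_half1D_le1 (R : realFieldType) (y : R) : `|y| <= 1 -> `|(1 + y) / 2| <= 1.
Proof. by rewrite !ler_norml => /andP [y1 y2]; apply/andP; split; lra. Qed.

Lemma perturbed_product_ge (R : realFieldType) (x sg T d c : R) :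
  `|x| <= 2 -> `|sg| = 1 -> `|T| <= 1 -> `|d| <= c -> c <= 1 ->
  x * (sg - T) - 5 * c <= (x - sg * c) * (sg - (T + d)).
Proof.
move=> x2 sg1 T1 dc c1; have c0 : 0 <= c := le_trans (normr_ge0 d) dc.
have sg2 : sg * sg = 1 by rewrite -expr2 -real_normK ?num_real // sg1 expr1n.
have xd : x * d <= 2 * c.
  by apply: le_trans (ler_norm _) _; rewrite normrM ler_pM.
have sgT : - 1 <= sg * T.
  by move: T1; rewrite -[`|T|]mul1r -sg1 -normrM ler_norml => /andP[].
have sgd : - c <= sg * d.
  by move: dc; rewrite -[`|d|]mul1r -sg1 -normrM ler_norml => /andP[].
rewrite [leRHS](_ : _ = x * (sg - T) - x * d - c * (sg * sg)
                        + c * (sg * T) + c * (sg * d)); last by ring.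
rewrite sg2; nra.
Qed.

Lemma normr_le_div_sqrt (R : rcfType) (x K N : R) :
  1 <= K -> 0 < N -> x ^+ 2 <= K / N -> `|x| <= K / Num.sqrt N.
Proof.
move=> K1 N0 xK; have K0 : 0 <= K := le_trans ler01 K1.
rewrite -ler_sqr ?nnegrE ?divr_ge0 ?sqrtr_ge0 //.
rewrite real_normK ?num_real // expr_div_n sqr_sqrtr ?(ltW N0) //.
by apply: (le_trans xK); rewrite ler_pM2r ?invr_gt0 // expr2 ler_peMr.
Qed.

Section FiniteMean.
Variables (R : realFieldType) (T : finType) (p : T -> R).
Hypothesis p_sum1 : \sum_x p x = 1.

Lemma sum_prob_affine (a c : R) (f : T -> R) :
  \sum_x p x * (a * f x + c) = a * (\sum_x p x * f x) + c.
Proof.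
rewrite (eq_bigr (fun x => a * (p x * f x) + c * p x)) => [|x _]; last by ring.
by rewrite big_split /= -!mulr_sumr p_sum1 mulr1.
Qed.

Lemma sum_prob_sqr_dev (f : T -> R) (c : R) :
  \sum_x p x * (f x - c) ^+ 2
  = \sum_x p x * (f x - \sum_y p y * f y) ^+ 2 + (\sum_y p y * f y - c) ^+ 2.
Proof.
set mu := \sum_y p y * f y.
rewrite (eq_bigr (fun x => p x * (f x - mu) ^+ 2
    + (mu - c) * (2 * (p x * f x) - (c + mu) * p x))) => [|x _]; last by ring.
by rewrite big_split /= -mulr_sumr sumrB -!mulr_sumr p_sum1 -/mu; ring.
Qed.

Hypothesis p_ge0 : forall x, 0 <= p x.

Lemma sum_prob_var_le (f : T -> R) (c : R) :
  \sum_x p x * (f x - \sum_y p y * f y) ^+ 2 <= \sum_x p x * (f x - c) ^+ 2.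
Proof. by rewrite [leRHS]sum_prob_sqr_dev lerDl sqr_ge0. Qed.

Lemma sqr_mean_dev_le (f : T -> R) (c : R) :
  (\sum_y p y * f y - c) ^+ 2 <= \sum_x p x * (f x - c) ^+ 2.
Proof.
by rewrite sum_prob_sqr_dev lerDr sumr_ge0 // => x _; rewrite mulr_ge0 ?sqr_ge0.
Qed.

End FiniteMean.

Section Tanh.
Variable R : realType.
Implicit Types x y : R.

Lemma tanhRE x : tanhR x = 1 - 2 * (expR x ^+ 2 + 1)^-1.
Proof.
have ex0 := expR_gt0 x.
have ex20 : expR x ^+ 2 + 1 != 0 by rewrite lt0r_neq0 // addr_gt0 // exprn_gt0.
by rewrite /tanhR expRN; field; rewrite ex20 lt0r_neq0.
Qed.

Lemma is_derive_invexpR2 x : is_derive x 1 (fun y => (expR y ^+ 2 + 1)^-1)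
  (- (expR x ^+ 2 + 1) ^- 2 * (2 * expR x ^+ 2)).
Proof.
have ex20 : expR x ^+ 2 + 1 != 0.
  by rewrite lt0r_neq0 // addr_gt0 // exprn_gt0 // expR_gt0.
have := @is_deriveV R (fun y => expR y ^+ 2 + 1) x _ 1 ex20
  (is_deriveD (is_deriveX 2 (is_derive_expR x)) (is_derive_cst (1 : R) x 1)).
move=> /= D; apply: (is_derive_eq D).
by rewrite -[_ *: _]/(_ * _) addr0 -[(_ * _) *: _]/(_ * _ * _) expr1 -mulrA -expr2.
Qed.

Lemma normr_tanhR_le1 x : `|tanhR x| <= 1.
Proof.
rewrite tanhRE; have ex2 := exprn_ge0 2 (expR_ge0 x).
have Ep : 0 < (expR x ^+ 2 + 1)^-1 by rewrite invr_gt0 ltr_wpDl.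
have E1 : (expR x ^+ 2 + 1)^-1 <= 1 by rewrite invf_le1 ?lerDr // ltr_wpDl.
rewrite ler_norml; lra.
Qed.

Lemma tanhR_lipschitz x y : `|tanhR x - tanhR y| <= `|x - y|.
Proof.
wlog xy : x y / x <= y.
  move=> W; have [|/ltW yx] := leP x y; first exact: W.
  by rewrite distrC [`|x - y|]distrC; exact: W.
pose g y := (expR y ^+ 2 + 1)^-1.
have gD z : derivable g z 1 by case: (is_derive_invexpR2 z).
have [c _ gyx] := MVT_segment xy (fun z _ => is_derive_invexpR2 z)
  (derivable_within_continuous (fun z _ => gD z)).
rewrite !tanhRE (_ : _ - _ = 2 * (g y - g x)); last by rewrite /g; ring.
rewrite -/(g y) -/(g x) gyx distrC.
have ec := exprn_ge0 2 (expR_ge0 c); set u := expR c ^+ 2 in ec *.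
have u1 : 0 < (u + 1) ^+ 2 by rewrite exprn_gt0 // ltr_wpDl.
have slope0 : 0 <= 4 * u / (u + 1) ^+ 2 by apply: divr_ge0; [apply: mulr_ge0 | apply: ltW].
have slope1 : 4 * u / (u + 1) ^+ 2 <= 1.
  by rewrite ler_pdivrMr // mul1r -subr_ge0 (_ : _ - _ = (u - 1) ^+ 2) ?sqr_ge0 //; ring.
rewrite mulrA (_ : 2 * _ = - (4 * u / (u + 1) ^+ 2)); last first.
  by field; rewrite lt0r_neq0 // ltr_wpDl.
by rewrite normrM normrN (ger0_norm slope0) ler_piMl.
Qed.

End Tanh.

Section Spins.
Variable R : realType.
Implicit Types b c : bool.

Lemma spin_sqr b : spin R b ^+ 2 = 1.
Proof. by case: b; rewrite ?sqrrN expr1n. Qed.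

Lemma normr_spin b : `|spin R b| = 1.
Proof. by case: b; rewrite ?normrN normr1. Qed.

Lemma spin_negb b : spin R (~~ b) = - spin R b.
Proof. by case: b; rewrite ?opprK. Qed.

Lemma eqb_negb_spin b c : (c == ~~ b)%:R = (1 - spin R b * spin R c) / 2 :> R.
Proof. by case: b; case: c => /=; field. Qed.

Variable n : nat.
Implicit Types (s : config n) (i : 'I_n).

Lemma setsite_at s i b : setsite s i b i = b.
Proof. by rewrite ffunE eqxx. Qed.

Lemma setsite_id s i : setsite s i (s i) = s.
Proof. by apply/ffunP => j; rewrite ffunE; case: eqP => [->|]. Qed.

Lemma magsum_setsite s i b :
  magsum R (setsite s i b) = magsum R s - spin R (s i) + spin R b.
Proof.
rewrite /magsum (bigD1 i) //= [in RHS](bigD1 i) //= setsite_at.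
rewrite (eq_bigr (fun j => spin R (s j))) => [|j ji]; first ring.
by rewrite ffunE (negbTE ji).
Qed.

Lemma normr_magsum_le s : `|magsum R s| <= n%:R.
Proof.
apply: (le_trans (ler_norm_sum _ _ _)).
by rewrite (eq_bigr (fun _ => 1)) => [|j _]; rewrite ?sumr_const ?card_ord ?normr_spin.
Qed.

Lemma normr_mag_le1 s : `|mag R s| <= 1.
Proof.
rewrite /mag normrM normfV normr_nat.
have [n0|n_gt0] := posnP n.
  move: (normr_magsum_le s); rewrite [in X in _ <= X]n0 normr_le0 => /eqP ->.
  by rewrite normr0 mul0r.
by rewrite ler_pdivrMr ?ltr0n // mul1r normr_magsum_le.
Qed.

Lemma sum_ltn_pairs (a : 'I_n -> R) :
  2 * (\sum_(i < n) \sum_(j < n | (i < j)%N) a i * a j)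
  = (\sum_(i < n) a i) ^+ 2 - \sum_(i < n) a i ^+ 2.
Proof.
have rowE i : \sum_(j < n) a i * a j
    = \sum_(j < n | (i < j)%N) a i * a j + a i ^+ 2 + \sum_(j < n | (j < i)%N) a i * a j.
  rewrite [LHS](bigD1 i) //= (bigID (fun j : 'I_n => (i < j)%N)) /= expr2.
  rewrite addrCA addrA; congr (_ + _ + _); apply: eq_bigl => j.
    by rewrite andb_idl // => ij; rewrite -val_eqE (gtn_eqF ij).
  by rewrite -val_eqE -leqNgt ltn_neqAle.
have symE : \sum_(i < n) \sum_(j < n | (j < i)%N) a i * a j
    = \sum_(i < n) \sum_(j < n | (i < j)%N) a i * a j.
  rewrite (exchange_big_dep predT) //=; apply: eq_bigr => i _.
  by apply: eq_bigr => j _; rewrite mulrC.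
have sqrE : (\sum_(i < n) a i) ^+ 2 = \sum_(i < n) \sum_(j < n) a i * a j.
  by rewrite expr2 big_distrl; apply: eq_bigr => i _; rewrite big_distrr.
rewrite sqrE (eq_bigr _ (fun i _ => rowE i)) !big_split /= symE; ring.
Qed.

End Spins.

Section Glauber.
Variables (R : realType) (beta h : R).

(* The probability that one heat-bath step raises the magnetisation sum by
   [2 * spin b] when the magnetisation is [x].  For the chain [d = spin b / n],
   since the local field of the chosen site excludes its own spin [- spin b];
   [d = 0] is the mean-field limit. *)
Definition jump_rate (b : bool) (d x : R) : R :=
  (1 - spin R b * x) / 2 * ((1 + spin R b * tanhR (beta * (x + d) + h)) / 2).

Variable n : nat.
Implicit Types (s t : config n) (i : 'I_n) (b c : bool).

Definition local_field (A : R) : R := beta / n%:R * A + h.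

Definition cavity s i : R := magsum R s - spin R (s i).

Definition spin_fluct s i : R := spin R (s i) - tanhR (local_field (cavity s i)).

Lemma cavity_setsite s i c : cavity (setsite s i c) i = cavity s i.
Proof. by rewrite /cavity magsum_setsite setsite_at addrK. Qed.

Lemma cw_weight_magsum s : cw_weight beta h s
  = expR (beta / n%:R * ((magsum R s ^+ 2 - n%:R) / 2) + h * magsum R s).
Proof.
rewrite /cw_weight /cw_energy; congr expR; congr (_ * _ + _).
have sqr_sum : \sum_(i < n) spin R (s i) ^+ 2 = n%:R.
  by rewrite (eq_bigr (fun _ => 1)) => [|i _]; rewrite ?sumr_const ?card_ord ?spin_sqr.
have := sum_ltn_pairs (fun i => spin R (s i)).
by rewrite sqr_sum -/(magsum R s) => <-; field.
Qed.

Lemma cw_weight_setsite s i c : cw_weight beta h (setsite s i c)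
  = expR (beta / n%:R * ((cavity s i ^+ 2 + 1 - n%:R) / 2) + h * cavity s i)
    * expR (spin R c * local_field (cavity s i)).
Proof.
rewrite cw_weight_magsum magsum_setsite -/(cavity s i) -expRD /local_field.
by congr expR; rewrite sqrrD spin_sqr; move: (beta / n%:R) => a; field.
Qed.

Lemma cond_probE s i c :
  cond_prob beta h s i c = (1 + spin R c * tanhR (local_field (cavity s i))) / 2.
Proof.
rewrite /cond_prob !cw_weight_setsite /tanhR.
set K := expR _; set L := local_field _.
have K0 : 0 < K by exact: expR_gt0.
have eL := expR_gt0 L; have eNL := expR_gt0 (- L).
have cosh0 : expR L + expR (- L) != 0 by rewrite lt0r_neq0 // addr_gt0.
case: c => /=; rewrite mul1r ?mulN1r; field; rewrite ?cosh0 //;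
  by rewrite -mulrDr mulf_neq0 // lt0r_neq0.
Qed.

Lemma expR_spin_tanhR_odd b (L : R) :
  expR (spin R (~~ b) * L) * (spin R (~~ b) - tanhR L)
  = - (expR (spin R b * L) * (spin R b - tanhR L)).
Proof.
have eL := expR_gt0 L; have eNL := expR_gt0 (- L).
have cosh0 : expR L + expR (- L) != 0 by rewrite lt0r_neq0 // addr_gt0.
by rewrite /tanhR; case: b => /=; rewrite !(mul1r, mulN1r); field.
Qed.

Lemma sum_agree_setsite s i (F : config n -> R) :
  \sum_(t : config n) (\big[andb/true]_(j < n | j != i) (t j == s j))%:R * F t
  = F (setsite s i true) + F (setsite s i false).
Proof.
have agree_set b : \big[andb/true]_(j < n | j != i) (setsite s i b j == s j).
  by rewrite big_andE; apply/forallP => j; apply/implyP => ji; rewrite ffunE (negbTE ji).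
have setsite_neq : setsite s i false != setsite s i true.
  by apply/eqP => /(congr1 (fun t => t i)); rewrite !setsite_at.
rewrite (bigD1 (setsite s i true)) //= (bigD1 (setsite s i false)) //= !agree_set !mul1r.
rewrite big1 ?addr0 // => t /andP [t_neq1 t_neq0].
case: (boolP (\big[andb/true]_(j < n | j != i) (t j == s j))) => [|_]; last by rewrite mul0r.
rewrite big_andE => /forallP agree_t.
suff t_set : t = setsite s i (t i) by move: t_neq1 t_neq0; rewrite t_set; case: (t i); rewrite eqxx.
apply/ffunP => j; rewrite ffunE; case: eqP => [->//|/eqP ji].
by have /implyP/(_ ji)/eqP := agree_t j.
Qed.

Lemma glauber_sumE s (F : config n -> R) :
  \sum_(t : config n) glauber beta h s t * F t
  = n%:R^-1 * \sum_i (cond_prob beta h s i true * F (setsite s i true)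
                      + cond_prob beta h s i false * F (setsite s i false)).
Proof.
rewrite /glauber (eq_bigr _ (fun t _ => big_distrl _ _ _)) exchange_big /= mulr_sumr.
apply: eq_bigr => i _.
have := sum_agree_setsite s i (fun t => cond_prob beta h s i (t i) * F t).
rewrite /= !setsite_at => <-.
by rewrite mulr_sumr; apply: eq_bigr => t _; ring.
Qed.

Lemma magsum_setsite_jump s i b c :
  (magsum R (setsite s i c) == magsum R s + 2 * spin R b) = (c == b) && (s i == ~~ b).
Proof.
rewrite magsum_setsite; apply/eqP/andP => [|[/eqP-> /eqP->]]; last first.
  by rewrite spin_negb; ring.
by case: b; case: c; case: (s i) => //= E; exfalso; lra.
Qed.

Lemma Qk_jump_rate s b : (0 < n)%N ->
  Qk beta h (2 * spin R b) s = jump_rate b (spin R b / n%:R) (mag R s).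
Proof.
move=> n_gt0; have n0 : n%:R != 0 :> R by rewrite pnatr_eq0 -lt0n.
pose jumps (t : config n) : R := (magsum R t == magsum R s + 2 * spin R b)%:R.
have siteE i : cond_prob beta h s i true * jumps (setsite s i true)
    + cond_prob beta h s i false * jumps (setsite s i false)
    = (1 - spin R b * spin R (s i)) / 2
      * ((1 + spin R b * tanhR (beta * (mag R s + spin R b / n%:R) + h)) / 2).
  rewrite /jumps !magsum_setsite_jump -eqb_negb_spin.
  case: (eqVneq (s i) (~~ b)) => [si|_]; last by rewrite !andbF !mulr0 mul0r addr0.
  have fieldE : local_field (cavity s i) = beta * (mag R s + spin R b / n%:R) + h.
    by rewrite /local_field /cavity si spin_negb opprK /mag; field.
  rewrite !cond_probE fieldE mul1r.
  by case: b {si fieldE jumps} => /=; rewrite ?mulr1 ?mulr0 ?addr0 ?add0r ?mul1r.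
rewrite /Qk glauber_sumE (eq_bigr _ (fun i _ => siteE i)) -!big_distrl /=.
rewrite sumrB sumr_const card_ord -mulr_sumr -/(magsum R s) /jump_rate /mag.
by field.
Qed.

Lemma Qkk_jump_rate s b : (0 < n)%N ->
  Qkk beta h (2 * spin R b) s = jump_rate b (spin R b / n%:R) (mag R s)
    * jump_rate b (spin R b / n%:R) (mag R s + 2 * spin R b / n%:R).
Proof.
move=> n_gt0; have n0 : n%:R != 0 :> R by rewrite pnatr_eq0 -lt0n.
rewrite -Qk_jump_rate // /Qkk /Qk big_distrl /=; apply: eq_bigr => t _.
set k := 2 * spin R b.
under eq_bigr do rewrite -mulrA; rewrite -mulr_sumr -mulrA; congr (_ * _).
case: (eqVneq (magsum R t) (magsum R s + k)) => [tE|_]; last first.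
  by rewrite mul0r big1 // => u _; rewrite mulr0.
by rewrite mul1r -/(Qk beta h k t) Qk_jump_rate // /mag tE; congr jump_rate; field.
Qed.

End Glauber.

Section GibbsMeasure.
Variables (R : realType) (beta h : R) (n : nat).

Lemma cw_Z_gt0 : 0 < cw_Z beta h n.
Proof.
rewrite /cw_Z (bigD1 [ffun=> true]) //= ltr_pwDl ?expR_gt0 // sumr_ge0 // => s _.
exact: expR_ge0.
Qed.

Lemma cw_P_ge0 (s : config n) : 0 <= cw_P beta h s.
Proof. exact: divr_ge0 (expR_ge0 _) (ltW cw_Z_gt0). Qed.

Lemma cw_P_sum1 : \sum_(s : config n) cw_P beta h s = 1.
Proof. by rewrite -mulr_suml divff // lt0r_neq0 // cw_Z_gt0. Qed.

End GibbsMeasure.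

Section JumpRate.
Variables (R : realType) (beta h : R).
Implicit Types (b : bool) (d x y : R).

Lemma normr_jump_rate_le1 b d x : `|x| <= 1 -> `|jump_rate beta h b d x| <= 1.
Proof.
move=> x1; rewrite /jump_rate normrM mulr_ile1 //.
  by apply: normr_half1D_le1; rewrite normrN normrM normr_spin mul1r.
by apply: normr_half1D_le1; rewrite normrM normr_spin mul1r normr_tanhR_le1.
Qed.

Lemma jump_rate_fixed_point b m0 : m0 = tanhR (beta * m0 + h) ->
  jump_rate beta h b 0 m0 = (1 - m0 ^+ 2) / 4.
Proof. by rewrite /jump_rate addr0 => <-; case: b => /=; field. Qed.

Hypothesis beta_le1 : `|beta| <= 1.

Lemma jump_rate_lipschitz b d d' x y : `|x| <= 1 ->
  `|jump_rate beta h b d x - jump_rate beta h b d' y| <= `|x - y| + `|d - d'|.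
Proof.
move=> x1; rewrite /jump_rate; apply: le_trans; first apply: normr_mulB_le.
- by apply: normr_half1D_le1; rewrite normrN normrM normr_spin mul1r.
- by apply: normr_half1D_le1; rewrite normrM normr_spin mul1r normr_tanhR_le1.
have tanh_diff : `|tanhR (beta * (x + d) + h) - tanhR (beta * (y + d') + h)|
    <= `|x - y| + `|d - d'|.
  apply: (le_trans (tanhR_lipschitz _ _)).
  rewrite (_ : _ - _ = beta * ((x - y) + (d - d'))); last by ring.
  by rewrite normrM; apply: le_trans (ler_normD _ _); rewrite ler_piMl.
set t := tanhR (beta * (x + d) + h) in tanh_diff *.
set t' := tanhR (beta * (y + d') + h) in tanh_diff *.
rewrite (_ : _ - (1 + _ * t') / 2 = spin R b * (t - t') / 2); last by ring.
rewrite (_ : _ - (1 - _ * y) / 2 = - (spin R b * (x - y)) / 2); last by ring.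
rewrite !(normrM, normrN) normr_spin !mul1r [`|2^-1|]ger0_norm ?invr_ge0 //.
have := normr_ge0 (d - d'); lra.
Qed.

End JumpRate.

Section OneStep.
Variables (R : realType) (beta h m0 : R) (n : nat).
Hypothesis beta_le1 : `|beta| <= 1.
Hypothesis m0_fixed : m0 = tanhR (beta * m0 + h).
Hypothesis n_gt0 : (0 < n)%N.
Implicit Types (s : config n) (b : bool).

Lemma Qk_near_fixed_point s b :
  `|Qk beta h (2 * spin R b) s - (1 - m0 ^+ 2) / 4| <= `|mag R s - m0| + n%:R^-1.
Proof.
rewrite Qk_jump_rate // -(jump_rate_fixed_point b m0_fixed).
apply: le_trans.
  exact: (jump_rate_lipschitz h beta_le1 b _ _ _ (normr_mag_le1 R s)).
by rewrite subr0 normrM normr_spin mul1r normfV normr_nat.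
Qed.

Lemma Qkk_sub_sqr_Qk_le s b :
  `|Qkk beta h (2 * spin R b) s - Qk beta h (2 * spin R b) s ^+ 2| <= 2 / n%:R.
Proof.
rewrite Qkk_jump_rate // Qk_jump_rate // expr2 -mulrBr normrM distrC.
set d := spin R b / n%:R.
apply: le_trans (_ : 1 * (`|mag R s - (mag R s + 2 * spin R b / n%:R)| + `|d - d|) <= _).
  apply: ler_pM; rewrite ?normr_ge0 ?normr_jump_rate_le1 ?normr_mag_le1 //.
  exact: (jump_rate_lipschitz h beta_le1 b _ _ _ (normr_mag_le1 R s)).
rewrite mul1r subrr normr0 addr0 opprD addrA subrr add0r normrN.
by rewrite -mulrA normrM normrM normr_spin mul1r normfV normr_nat ger0_norm.
Qed.

End OneStep.

Section Flip.
Variables (R : realType) (beta h : R) (n : nat).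
Implicit Types (s : config n) (i : 'I_n).

Definition flip s i : config n := setsite s i (~~ s i).

Lemma flipK i : involutive (flip ^~ i).
Proof.
move=> s; apply/ffunP => j; rewrite /flip !ffunE.
by case: eqP => [->|//]; rewrite eqxx negbK.
Qed.

Lemma sum_odd_flip_eq0 i (G : config n -> R) :
  (forall s, G (flip s i) = - G s) -> \sum_(s : config n) G s = 0.
Proof.
move=> Godd; have : \sum_(s : config n) G s = \sum_(s : config n) G (flip s i).
  by apply: reindex_inj; exact: inv_inj (flipK i).
by rewrite (eq_bigr _ (fun s _ => Godd s)) sumrN; lra.
Qed.

Lemma gibbs_cavity_identity i (f : R -> R) :
  \sum_(s : config n) cw_weight beta h s * (f (cavity R s i) * spin_fluct beta h s i) = 0.
Proof.
apply: (sum_odd_flip_eq0 (i := i)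
  (G := fun s => cw_weight beta h s * (f (cavity R s i) * spin_fluct beta h s i))) => s.
have ws := cw_weight_setsite beta h s i (s i); rewrite setsite_id in ws.
rewrite /flip /spin_fluct cavity_setsite setsite_at cw_weight_setsite ws.
by rewrite -!mulrA !(mulrCA _ (f _)) expR_spin_tanhR_odd; ring.
Qed.

End Flip.

Lemma fixed_point_drift_ge (R : realType) (beta h m0 m : R) :
  0 <= beta -> m0 = tanhR (beta * m0 + h) ->
  (1 - beta) * (m - m0) ^+ 2 <= (m - m0) * (m - tanhR (beta * m + h)).
Proof.
move=> beta_ge0 m0_fixed; set x := m - m0.
have drift : `|tanhR (beta * m + h) - m0| <= beta * `|x|.
  rewrite [X in _ - X]m0_fixed; apply: le_trans (tanhR_lipschitz _ _) _.
  rewrite (_ : _ - _ = beta * x); last by rewrite /x; ring.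
  by rewrite normrM ger0_norm.
have cross : x * (tanhR (beta * m + h) - m0) <= beta * x ^+ 2.
  apply: le_trans (ler_norm _) _; rewrite normrM -real_normK ?num_real // expr2 mulrCA.
  by rewrite ler_wpM2l.
rewrite (_ : _ * (_ - _) = x ^+ 2 - x * (tanhR (beta * m + h) - m0)); last by rewrite /x; ring.
lra.
Qed.

Section Concentration.
Variables (R : realType) (beta h m0 : R) (n : nat).
Hypothesis beta_ge0 : 0 <= beta.
Hypothesis beta_lt1 : beta < 1.
Hypothesis m0_fixed : m0 = tanhR (beta * m0 + h).
Hypothesis n_gt0 : (0 < n)%N.
Implicit Types (s : config n).

Lemma cavity_drift_sum_ge s :
  n%:R * ((mag R s - m0) * (mag R s - tanhR (beta * mag R s + h))) - 5
  <= \sum_(i < n) (cavity R s i / n%:R - m0) * spin_fluct beta h s i.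
Proof.
have n0 : n%:R != 0 :> R by rewrite pnatr_eq0 -lt0n.
have ninv1 : n%:R^-1 <= 1 :> R by rewrite invf_le1 ?ler1n ?ltr0n.
set T := tanhR (beta * mag R s + h); set x := mag R s - m0.
have x2 : `|x| <= 2.
  apply: le_trans (ler_normB _ _) _.
  have := normr_mag_le1 R s; have := normr_tanhR_le1 (beta * m0 + h); rewrite -m0_fixed; lra.
have site i : x * (spin R (s i) - T) - 5 * n%:R^-1
    <= (cavity R s i / n%:R - m0) * spin_fluct beta h s i.
  rewrite /spin_fluct (_ : _ - m0 = x - spin R (s i) * n%:R^-1); last first.
    by rewrite /x /mag /cavity; field.
  rewrite (_ : tanhR _ = T + (tanhR (local_field beta h n (cavity R s i)) - T)); last by ring.
  apply: perturbed_product_ge; rewrite ?normr_spin ?normr_tanhR_le1 //.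
  apply: le_trans (tanhR_lipschitz _ _) _.
  rewrite (_ : _ - _ = - (beta * (spin R (s i) * n%:R^-1))); last first.
    by rewrite /local_field /cavity /mag; field.
  rewrite normrN !normrM normr_spin mul1r ger0_norm // normfV normr_nat.
  by rewrite ler_piMl ?invr_ge0 // ltW.
apply: le_trans (ler_sum _ (fun i _ => site i)).
rewrite sumrB -mulr_sumr sumrB !sumr_const card_ord.
rewrite -[T *+ n]mulr_natr -[5 / n%:R *+ n]mulr_natr.
rewrite (_ : x * (magsum R s - T * n%:R) - 5 / n%:R * n%:R
            = n%:R * (x * (mag R s - T)) - 5) //.
by rewrite /x /mag; field.
Qed.

Lemma gibbs_mag_dev_sqr_le :
  \sum_(s : config n) cw_P beta h s * (mag R s - m0) ^+ 2 <= 5 / ((1 - beta) * n%:R).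
Proof.
have n_pos : 0 < n%:R :> R by rewrite ltr0n.
have beta1 : 0 < 1 - beta by rewrite subr_gt0.
have Z0 := cw_Z_gt0 beta h n.
have drift0 : \sum_(s : config n) cw_weight beta h s
    * \sum_(i < n) (cavity R s i / n%:R - m0) * spin_fluct beta h s i = 0.
  under eq_bigr do rewrite mulr_sumr.
  rewrite exchange_big big1 //= => i _.
  exact: (gibbs_cavity_identity beta h i (fun A => A / n%:R - m0)).
have site s : cw_weight beta h s * ((1 - beta) * n%:R * (mag R s - m0) ^+ 2 - 5)
    <= cw_weight beta h s * \sum_(i < n) (cavity R s i / n%:R - m0) * spin_fluct beta h s i.
  apply: ler_wpM2l; first exact: expR_ge0.
  apply: le_trans (cavity_drift_sum_ge s); rewrite lerD2r [_ * n%:R]mulrC -mulrA.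
  by apply: ler_wpM2l; [exact: ler0n | exact: fixed_point_drift_ge].
have : \sum_(s : config n)
    cw_weight beta h s * ((1 - beta) * n%:R * (mag R s - m0) ^+ 2 - 5) <= 0.
  by rewrite -[leRHS]drift0; apply: ler_sum => s _; exact: site.
rewrite (eq_bigr (fun s => (1 - beta) * n%:R * (cw_weight beta h s * (mag R s - m0) ^+ 2)
    - 5 * cw_weight beta h s)) => [|s _]; last by ring.
rewrite sumrB -!mulr_sumr -/(cw_Z beta h n) subr_le0 => bound.
rewrite (eq_bigr (fun s => cw_weight beta h s * (mag R s - m0) ^+ 2 / cw_Z beta h n)) => [|s _].
  by rewrite -mulr_suml ler_pdivrMr // mulrAC ler_pdivlMr ?mulr_gt0 // mulrC.
by rewrite /cw_P mulrAC.
Qed.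

Lemma gibbs_Qk_dev_sqr_le b :
  \sum_(s : config n) cw_P beta h s * (Qk beta h (2 * spin R b) s - (1 - m0 ^+ 2) / 4) ^+ 2
  <= (10 / (1 - beta) + 2) / n%:R.
Proof.
have n_pos : 0 < n%:R :> R by rewrite ltr0n.
have ninv1 : n%:R^-1 <= 1 :> R by rewrite invf_le1 ?ler1n.
have beta_le1 : `|beta| <= 1 by rewrite ger0_norm // ltW.
have site s : (Qk beta h (2 * spin R b) s - (1 - m0 ^+ 2) / 4) ^+ 2
    <= 2 * (mag R s - m0) ^+ 2 + 2 / n%:R.
  have near := Qk_near_fixed_point beta_le1 m0_fixed n_gt0 s b.
  rewrite -[leLHS]real_normK ?num_real // -[(mag R s - m0) ^+ 2]real_normK ?num_real //.
  set q := `|_ - (1 - _) / 4| in near *; set a := `|mag R s - m0| in near *.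
  have q0 : 0 <= q := normr_ge0 _; have a0 : 0 <= a := normr_ge0 _.
  have t0 : 0 <= n%:R^-1 :> R by rewrite invr_ge0 ler0n.
  have := sqr_ge0 (a - n%:R^-1); nra.
apply: le_trans (_ : \sum_(s : config n)
    cw_P beta h s * (2 * (mag R s - m0) ^+ 2 + 2 / n%:R) <= _).
  by apply: ler_sum => s _; rewrite ler_wpM2l ?cw_P_ge0 ?site.
have beta1 : 1 - beta != 0 by rewrite subr_eq0 eq_sym lt_eqF.
rewrite sum_prob_affine ?cw_P_sum1 // [leRHS]mulrDl lerD2r.
rewrite (_ : 10 / (1 - beta) / n%:R = 2 * (5 / ((1 - beta) * n%:R))); last first.
  by field; rewrite beta1 lt0r_neq0.
by apply: ler_wpM2l; [exact: ler0n | exact: gibbs_mag_dev_sqr_le].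
Qed.

End Concentration.

Theorem lemma8 (R : realType) (beta h m0 : R) :
  0 < beta -> beta < 1 ->
  m0 = tanhR (beta * m0 + h) ->
  exists C : R, forall (n : nat), (0 < n)%N ->
    forall k : R, (k = 2 \/ k = -2) ->
      (forall s : config n,
         `|Qk beta h k s - (1 - m0 ^+ 2) / 4| <= C * (`|mag R s - m0| + n%:R^-1)
         /\ `|Qkk beta h k s - Qk beta h k s ^+ 2| <= C / n%:R)
      /\ `|qk beta h n k - (1 - m0 ^+ 2) / 4| <= C / Num.sqrt n%:R
      /\ varQk beta h n k <= C / n%:R.
Proof.
move=> beta_gt0 beta_lt1 m0_fixed; have beta_ge0 := ltW beta_gt0.
have beta_le1 : `|beta| <= 1 by rewrite ger0_norm // ltW.
exists (10 / (1 - beta) + 2); set K := _ + 2.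
have K2 : 2 <= K by rewrite lerDr divr_ge0 // subr_ge0 ltW.
move=> n n_gt0 k k2; have n_pos : 0 < n%:R :> R by rewrite ltr0n.
have [b ->] : exists b, k = 2 * spin R b.
  by case: k2 => ->; [exists true | exists false]; rewrite /= ?mulrN1 ?mulr1.
have dev := gibbs_Qk_dev_sqr_le beta_ge0 beta_lt1 m0_fixed n_gt0 b.
split; [move=> s; split | split].
- apply: le_trans (Qk_near_fixed_point beta_le1 m0_fixed n_gt0 s b) _.
  by apply: ler_peMl; [rewrite addr_ge0 ?invr_ge0 | lra].
- apply: le_trans (Qkk_sub_sqr_Qk_le h beta_le1 n_gt0 s b) _.
  by rewrite ler_pM2r ?invr_gt0.
- apply: normr_le_div_sqrt => //; first lra.
  rewrite /qk; apply: le_trans dev.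
  by apply: sqr_mean_dev_le => [|s]; [exact: cw_P_sum1 | exact: cw_P_ge0].
- exact: le_trans (sum_prob_var_le (cw_P_sum1 beta h n) _ _) dev.
Qed.
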